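(* Fix a user association $\mathbf x=(x_{ij})$ with $x_{ij}\in\{0,1\}$ and $\sum_{i\in\mathcal I}x_{ij}=1$ for every $j\in\mathcal J$. Consider the load distribution and power control problem \[ \max_{\mathbf d,\mathbf p}\ \sum_{i\in\mathcal I}\sum_{j\in\mathcal J}\omega_j x_{ij}\log_2\!\left(d_i\log_2\!\left(1+\frac{p_i g_{ij}}{\sum_{k\in\mathcal I\setminus\{i\}}d_k p_k g_{kj}+\sigma^2}\right)\right)+C \] subject to $0\le d_i\le 1$ and $0\le p_i\le P_i$ for all $i\in\mathcal I$, where $C=\sum_{i\in\mathcal I}\sum_{j\in\mathcal J}\omega_j x_{ij}\log_2\!\big(KB\omega_j/\sum_{l\in\mathcal J}\omega_l x_{il}\big)$ is a constant, terms with $x_{ij}=0$ are taken to be $0$, and it is assumed that if either of $p_i$ and $d_i$ is $0$ then the other is $0$ as well. Then for each $i\in\mathcal I$, the optimal load satisfies $d_i^*=1$ if there exists at least one user $j$ with $x_{ij}=1$, and $d_i^*=0$ otherwise.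
   Context: $\mathcal I=\{1,\dots,I\}$ is the set of base stations and $\mathcal J=\{1,\dots,J\}$ the set of users; $x_{ij}=1$ means user $j$ is associated with base station $i$. $d_i$ is the load and $p_i$ the per-resource-block transmit power of base station $i$, with maximum power $P_i>0$. Constants $K,B>0$, channel gains $g_{ij}>0$, noise power $\sigma^2>0$ and user priorities $\omega_j>0$ are given. *)

From HB Require Import structures.
From mathcomp Require Import all_boot all_order all_algebra.
From mathcomp Require Import all_classical all_reals.
From mathcomp Require Import ereal exp.
Set Implicit Arguments. Unset Strict Implicit. Unset Printing Implicit Defensive.
Import Order.TTheory GRing.Theory Num.Theory.
Local Open Scope ring_scope.

Section LoadPower.
Variables (R : realType) (I J : nat).

Definition log2 (y : R) : R := ln y / ln 2.

Definition log2e (y : R) : \bar R := if 0 < y then (log2 y)%:E else -oo%E.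

Definition sinr (sigma2 : R) (g : 'I_I -> 'I_J -> R) (d p : 'I_I -> R)
    (i : 'I_I) (j : 'I_J) : R :=
  p i * g i j / (\sum_(k < I | k != i) d k * p k * g k j + sigma2).

Definition constC (K B : R) (w : 'I_J -> R) (x : 'I_I -> 'I_J -> bool) : R :=
  \sum_(i < I) \sum_(j < J)
     (if x i j then w j * log2 (K * B * w j / \sum_(l < J) w l * (x i l)%:R)
      else 0).

(* objective of the load distribution and power control problem, valued in
   the extended reals (log2 0 = -oo); terms with x_ij = 0 are 0 *)
Definition objective (K B sigma2 : R) (g : 'I_I -> 'I_J -> R) (w : 'I_J -> R)
    (x : 'I_I -> 'I_J -> bool) (d p : 'I_I -> R) : \bar R :=
  ((\sum_(i < I) \sum_(j < J)
      (if x i j then (w j)%:E * log2e (d i * log2 (1 + sinr sigma2 g d p i j))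
       else 0%E))
   + (constC K B w x)%:E)%E.

Definition feasible (P : 'I_I -> R) (d p : 'I_I -> R) : Prop :=
  forall i, [/\ 0 <= d i <= 1, 0 <= p i <= P i & (d i = 0 <-> p i = 0)].

Definition optimal (K B sigma2 : R) (P : 'I_I -> R) (g : 'I_I -> 'I_J -> R)
    (w : 'I_J -> R) (x : 'I_I -> 'I_J -> bool) (d p : 'I_I -> R) : Prop :=
  feasible P d p /\
  forall d' p', feasible P d' p' ->
    (objective K B sigma2 g w x d' p' <= objective K B sigma2 g w x d p)%E.

End LoadPower.

From HB Require Import structures.
From mathcomp Require Import all_boot all_order all_algebra.
From mathcomp Require Import all_classical all_reals.
From mathcomp Require Import ereal exp.
From mathcomp Require Import sequences ring.
Set Implicit Arguments. Unset Strict Implicit. Unset Printing Implicit Defensive.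
Import Order.TTheory GRing.Theory Num.Theory.
Local Open Scope ring_scope.

(* The objective is finite at the point where every base station runs at
   full load and full power, so at an optimum every base station serving a
   user has positive load and power.  If such a station had d_i < 1, the
   substitution (d_i, p_i) := (1, d_i p_i) leaves every interference term
   d_k p_k unchanged, and by strict concavity of the logarithm
   d log(1 + s) < log(1 + d s), so the rates of its users strictly increase.
   A station serving nobody only contributes interference: switching it off
   (d_i = p_i = 0) strictly increases every rate in the network. *)

Lemma ltr_sum_le_lt (R : numDomainType) (T : finType) (F G : T -> R) (t : T) :
  (forall i, F i <= G i) -> F t < G t -> \sum_i F i < \sum_i G i.
Proof.
move=> FG Ft; rewrite (bigD1 t) //= [ltRHS](bigD1 t) //=.
by rewrite ltr_leD // ler_sum.
Qed.

Section StrictConcavity.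
Variable R : realType.

Lemma expR_gt_tangent (m z : R) : z != m -> expR m * (1 + (z - m)) < expR z.
Proof.
move=> zm; rewrite -[in ltRHS](subrKC m z) expRD ltr_pM2l ?expR_gt0 //.
by rewrite expR_gt1Dx // subr_eq0.
Qed.

Lemma expR_convex_lt (a u v : R) : 0 < a < 1 -> u != v ->
  expR ((1 - a) * u + a * v) < (1 - a) * expR u + a * expR v.
Proof.
move=> /andP[a0 a1] uv; set m := (1 - a) * u + a * v.
have um : u != m.
  apply: contra_neq uv => /eqP; rewrite /m -subr_eq0.
  have -> : u - ((1 - a) * u + a * v) = a * (u - v) by ring.
  by rewrite mulf_eq0 gt_eqF //= subr_eq0 => /eqP.
have vm : v != m.
  apply: contra_neq uv => /eqP; rewrite /m -subr_eq0.
  have -> : v - ((1 - a) * u + a * v) = (1 - a) * (v - u) by ring.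
  by rewrite mulf_eq0 subr_eq0 gt_eqF ?subr_gt0 //= subr_eq0 => /eqP.
have -> : expR m =
    (1 - a) * (expR m * (1 + (u - m))) + a * (expR m * (1 + (v - m))).
  by rewrite /m; ring.
by rewrite ltrD // ltr_pM2l ?subr_gt0 // expR_gt_tangent.
Qed.

Lemma mul_ln1D_lt (a s : R) : 0 < a < 1 -> 0 < s ->
  a * ln (1 + s) < ln (1 + a * s).
Proof.
move=> a01 s0; have /andP[a0 _] := a01.
have ln1s : 0 < ln (1 + s) by rewrite ln_gt0 // ltrDl.
rewrite -ltr_expR lnK ?posrE ?addr_gt0 ?mulr_gt0 //.
have := expR_convex_lt a01 (negbT (lt_eqF ln1s)).
rewrite mulr0 add0r expR0 mulr1 lnK ?posrE ?addr_gt0 //.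
by have -> : (1 - a) + a * (1 + s) = 1 + a * s by ring.
Qed.

Lemma ln2_gt0 : 0 < ln (2 : R).
Proof. by rewrite ln_gt0 // ltr1n. Qed.

Lemma log2_gt0 (y : R) : 1 < y -> 0 < log2 y.
Proof. by move=> y1; rewrite /log2 divr_gt0 // ?ln2_gt0 // ln_gt0. Qed.

Lemma ltr_log2 (a b : R) : 0 < a -> 0 < b -> (log2 a < log2 b) = (a < b).
Proof. by move=> a0 b0; rewrite /log2 ltr_pM2r ?invr_gt0 ?ln2_gt0 // ltr_ln. Qed.

Lemma ler_log2 (a b : R) : 0 < a -> 0 < b -> (log2 a <= log2 b) = (a <= b).
Proof. by move=> a0 b0; rewrite /log2 ler_pM2r ?invr_gt0 ?ln2_gt0 // ler_ln. Qed.

Lemma mul_log2_1D_lt (a s : R) : 0 < a < 1 -> 0 < s ->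
  a * log2 (1 + s) < log2 (1 + a * s).
Proof.
by move=> a01 s0; rewrite /log2 mulrA ltr_pM2r ?invr_gt0 ?ln2_gt0 ?mul_ln1D_lt.
Qed.

End StrictConcavity.

Section OptimalLoad.
Variables (R : realType) (I J : nat) (K B sigma2 : R) (P : 'I_I -> R)
  (g : 'I_I -> 'I_J -> R) (w : 'I_J -> R) (x : 'I_I -> 'I_J -> bool).
Hypotheses (hsigma2 : 0 < sigma2) (hP : forall i, 0 < P i)
  (hg : forall i j, 0 < g i j) (hw : forall j, 0 < w j).

Implicit Types (d p : 'I_I -> R) (i k : 'I_I) (j : 'I_J).

Definition interference d p i j :=
  \sum_(k < I | k != i) d k * p k * g k j + sigma2.

Definition rate d p i j := d i * log2 (1 + sinr sigma2 g d p i j).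

Definition utility d p :=
  \sum_(i < I) \sum_(j < J) (if x i j then w j * log2 (rate d p i j) else 0).

Lemma sinrE d p i j : sinr sigma2 g d p i j = p i * g i j / interference d p i j.
Proof. by []. Qed.

Lemma interference_gt0 d p i j : feasible P d p -> 0 < interference d p i j.
Proof.
move=> f; rewrite ltr_wpDl // sumr_ge0 // => k _.
have [/andP[d0 _] /andP[p0 _] _] := f k.
by rewrite !mulr_ge0 // ltW.
Qed.

Lemma sinr_gt0 d p i j : feasible P d p -> 0 < p i -> 0 < sinr sigma2 g d p i j.
Proof. by move=> f p0; rewrite sinrE divr_gt0 ?mulr_gt0 ?interference_gt0. Qed.

Lemma interference_full_load d p i k j :
  interference [eta d with i |-> 1] [eta p with i |-> d i * p i] k j =
  interference d p k j.
Proof.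
congr (_ + _); apply: eq_bigr => l _ /=.
by case: eqP => [->|]; rewrite ?mul1r.
Qed.

Lemma interference_switch_off d p i k j : k != i ->
  interference d p k j =
  interference [eta d with i |-> 0] [eta p with i |-> 0] k j + d i * p i * g i j.
Proof.
move=> ki; rewrite /interference (bigD1 i) 1?eq_sym //=.
rewrite [in RHS](bigD1 i) 1?eq_sym //=.
rewrite eqxx !mul0r add0r [RHS]addrC addrA; congr (_ + _ + _).
by apply: eq_bigr => l /andP[_ /negbTE ->].
Qed.

Lemma objectiveE d p : (forall i j, x i j -> 0 < rate d p i j) ->
  objective K B sigma2 g w x d p = (utility d p + constC K B w x)%:E.
Proof.
move=> pos; rewrite /objective /utility EFinD; congr (_ + _)%E.
rewrite -sumEFin; apply: eq_bigr => i _; rewrite -sumEFin; apply: eq_bigr => j _.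
by case: ifP => // xij; rewrite /log2e -/(rate d p i j) pos.
Qed.

Lemma objective_Ny d p i j : x i j -> rate d p i j <= 0 ->
  objective K B sigma2 g w x d p = -oo%E.
Proof.
move=> xij r0; rewrite /objective (bigD1 i) //= (bigD1 j) //= xij.
rewrite /log2e -/(rate d p i j) ltNge r0.
by rewrite mulrNy gtr0_sg // mul1e !addNye.
Qed.

Lemma objective_lt d p d' p' i0 j0 :
  (forall i j, x i j -> 0 < rate d p i j) ->
  (forall i j, x i j -> rate d p i j <= rate d' p' i j) ->
  x i0 j0 -> rate d p i0 j0 < rate d' p' i0 j0 ->
  (objective K B sigma2 g w x d p < objective K B sigma2 g w x d' p')%E.
Proof.
move=> pos le xij0 lt0.
have pos' i j : x i j -> 0 < rate d' p' i j.
  by move=> xij; rewrite (lt_le_trans (pos _ _ xij)) ?le.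
have term_le i j : (if x i j then w j * log2 (rate d p i j) else 0)
                <= (if x i j then w j * log2 (rate d' p' i j) else 0).
  by case: ifP => // xij; rewrite ler_pM2l // ler_log2 ?pos ?pos' ?le.
rewrite objectiveE // objectiveE // lte_fin ltrD2r /utility.
apply: (ltr_sum_le_lt (t := i0)) => [i|]; first exact: ler_sum.
apply: (ltr_sum_le_lt (t := j0)) => // ; rewrite xij0.
by rewrite ltr_pM2l // ltr_log2 ?pos ?pos'.
Qed.

Lemma feasible_full : feasible P (fun=> 1) P.
Proof.
move=> i; split; [by rewrite ler01 lexx | by rewrite lexx ltW |].
by split=> /eqP; rewrite ?oner_eq0 ?gt_eqF.
Qed.

Lemma feasible_update d p i v q : feasible P d p ->
  0 <= v <= 1 -> 0 <= q <= P i -> (v = 0 <-> q = 0) ->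
  feasible P [eta d with i |-> v] [eta p with i |-> q].
Proof. by move=> f v01 q0P vq k /=; case: eqP => [->|_]; [split | exact: f]. Qed.

Lemma feasible_switch_off d p i : feasible P d p ->
  feasible P [eta d with i |-> 0] [eta p with i |-> 0].
Proof. by move=> f; apply: feasible_update; rewrite ?lexx ?ler01 ?ltW. Qed.

Lemma rate_full_load d p i j : feasible P d p -> 0 < d i < 1 -> 0 < p i ->
  rate d p i j < rate [eta d with i |-> 1] [eta p with i |-> d i * p i] i j.
Proof.
move=> f d01 p0.
rewrite /rate !sinrE interference_full_load /= eqxx mul1r -!mulrA.
by rewrite mul_log2_1D_lt // !mulr_gt0 ?invr_gt0 ?interference_gt0.
Qed.

Lemma rate_full_load_other d p i k j : k != i ->
  rate [eta d with i |-> 1] [eta p with i |-> d i * p i] k j = rate d p k j.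
Proof.
by move=> ki; rewrite /rate !sinrE interference_full_load /= (negbTE ki).
Qed.

Lemma rate_switch_off d p i k j : feasible P d p -> k != i ->
  0 < d i -> 0 < p i -> 0 < d k -> 0 < p k ->
  rate d p k j < rate [eta d with i |-> 0] [eta p with i |-> 0] k j.
Proof.
move=> f ki di0 pi0 dk0 pk0; have f0 := feasible_switch_off i f.
have I0 : 0 < interference [eta d with i |-> 0] [eta p with i |-> 0] k j.
  exact: interference_gt0.
have dpg : 0 < d i * p i * g i j by rewrite !mulr_gt0.
rewrite /rate /= (negbTE ki) ltr_pM2l //.
rewrite ltr_log2 ?addr_gt0 ?sinr_gt0 //=; last by rewrite (negbTE ki).
rewrite ltrD2l !sinrE /= (negbTE ki) (interference_switch_off _ _ _ ki).
by rewrite ltr_pM2l ?mulr_gt0 // ltf_pV2 ?posrE ?ltrDl // addr_gt0.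
Qed.

Lemma optimal_rate_gt0 d p i j : optimal K B sigma2 P g w x d p ->
  x i j -> 0 < rate d p i j.
Proof.
move=> [_ opt] xij; rewrite ltNge; apply/negP => r0.
have full_pos k l : x k l -> 0 < rate (fun=> 1) P k l.
  move=> _; rewrite /rate mul1r log2_gt0 // ltrDl sinr_gt0 //.
  exact: feasible_full.
have := opt _ _ feasible_full.
by rewrite (objective_Ny xij r0) (objectiveE full_pos) leeNy_eq.
Qed.

Lemma optimal_served_gt0 d p i j : optimal K B sigma2 P g w x d p ->
  x i j -> 0 < d i /\ 0 < p i.
Proof.
move=> opt xij; have [/andP[d0 _] /andP[p0 _] dp0] := opt.1 i.
have di0 : d i != 0.
  apply: contraTneq (optimal_rate_gt0 opt xij) => di0.
  by rewrite /rate di0 mul0r ltxx.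
have pi0 : p i != 0 by apply: contra_neq di0 => /dp0.
by rewrite !lt0r di0 pi0.
Qed.

Lemma optimal_undominated d p d' p' : optimal K B sigma2 P g w x d p ->
  feasible P d' p' -> (forall i j, x i j -> rate d p i j <= rate d' p' i j) ->
  forall i j, x i j -> rate d' p' i j <= rate d p i j.
Proof.
move=> opt f' le i j xij; rewrite leNgt; apply/negP => lt.
have := opt.2 _ _ f'; apply/negP; rewrite -ltNge.
by apply: (objective_lt _ le xij lt) => k l; apply: optimal_rate_gt0.
Qed.

Lemma optimal_served_load1 d p i j : optimal K B sigma2 P g w x d p ->
  x i j -> d i = 1.
Proof.
move=> opt xij; have [di0 pi0] := optimal_served_gt0 opt xij.
have [/andP[_ di1] /andP[_ piP] _] := opt.1 i.
apply/eqP; rewrite eq_le di1 leNgt; apply/negP => dilt1.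
have d01 : 0 < d i < 1 by rewrite di0.
have f' : feasible P [eta d with i |-> 1] [eta p with i |-> d i * p i].
  apply: feasible_update opt.1 _ _ _; first by rewrite ler01 lexx.
    by rewrite (mulr_ge0 (ltW di0) (ltW pi0)) (le_trans _ piP) // ler_piMl // ltW.
  by split=> /eqP; rewrite ?oner_eq0 ?gt_eqF ?mulr_gt0.
have le k l : x k l ->
    rate d p k l <= rate [eta d with i |-> 1] [eta p with i |-> d i * p i] k l.
  move=> _; have [->|ki] := eqVneq k i; first exact/ltW/(rate_full_load l opt.1).
  by rewrite rate_full_load_other.
have := optimal_undominated opt f' le xij.
by rewrite leNgt (rate_full_load j opt.1).
Qed.

Lemma optimal_unserved_load0 d p i k j : optimal K B sigma2 P g w x d p ->
  ~~ [exists l, x i l] -> x k j -> d i = 0.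
Proof.
move=> opt unserved xkj; have [/andP[di0 _] /andP[pi0 _] dp0] := opt.1 i.
apply/eqP; rewrite eq_le di0 andbT leNgt; apply/negP => di_gt0.
have pi_gt0 : 0 < p i.
  by rewrite lt0r pi0 andbT; apply: contra_neq (lt0r_neq0 di_gt0) => /dp0.
have served_ne l m : x l m -> l != i.
  move=> xlm; apply: contraNneq unserved => eli.
  by apply/existsP; exists m; rewrite -eli.
have lt l m : x l m ->
    rate d p l m < rate [eta d with i |-> 0] [eta p with i |-> 0] l m.
  move=> xlm; have [dl0 pl0] := optimal_served_gt0 opt xlm.
  exact: rate_switch_off m opt.1 (served_ne _ _ xlm) di_gt0 pi_gt0 dl0 pl0.
have f0 := feasible_switch_off i opt.1.
have := optimal_undominated opt f0 (fun l m xlm => ltW (lt l m xlm)) xkj.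
by rewrite leNgt lt.
Qed.

End OptimalLoad.

Theorem lemma1 (R : realType) (I J : nat) (K B sigma2 : R)
    (P : 'I_I -> R) (g : 'I_I -> 'I_J -> R) (w : 'I_J -> R)
    (x : 'I_I -> 'I_J -> bool)
    (hJ : (0 < J)%N)
    (hK : 0 < K) (hB : 0 < B) (hsigma2 : 0 < sigma2)
    (hP : forall i, 0 < P i) (hg : forall i j, 0 < g i j) (hw : forall j, 0 < w j)
    (hx : forall j, (\sum_(i < I) (x i j : nat))%N = 1%N)
    (d p : 'I_I -> R) :
  optimal K B sigma2 P g w x d p ->
  forall i : 'I_I, d i = if [exists j, x i j] then 1 else 0.
Proof.
move=> opt i; case: ifPn => [/existsP[j xij] | unserved].
  exact: (optimal_served_load1 hsigma2 hP hg hw opt xij).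
pose j0 : 'I_J := Ordinal hJ.
have [k xkj0] : exists k, x k j0.
  case: (pickP (x^~ j0)) => [k xk | none]; first by exists k.
  by have := hx j0; rewrite big1 // => k _; rewrite none.
exact: (optimal_unserved_load0 hsigma2 hP hg hw opt unserved xkj0).
Qed.
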